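(* Let $d\in\{2,3\}$ and let $K\subset M^{m\times n}$ be a $d$-dimensional subspace without Rank-$1$ connections, with $K=P_K(\mathbb{R}^d)$ where $P_K(z)=(a_{ij}\cdot z)_{ij}$, $a_{ij}\in\mathbb{R}^d$, is a linear isomorphism onto $K$. If $\dim\mathrm{Span}\{a_{i_0l}:l=1,\dots,n\}=2$ for some $i_0$, or $\dim\mathrm{Span}\{a_{lj_0}:l=1,\dots,m\}=2$ for some $j_0$, then there exists $\beta\in\mathbb{R}^{q_0}\setminus\{0\}$ with $\sum_{k=1}^{q_0}\beta_kM_k(X)\ge0$ for all $X\in K$ and $\sum_k\beta_kM_k\not\equiv0$ on $K$, where $M_1,\dots,M_{q_0}$ are all the $2\times2$ minors of $m\times n$ matrices.
   Context: A set has Rank-$1$ connections if it contains $A\ne B$ with $\mathrm{Rank}(A-B)=1$. *)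

From HB Require Import structures.
From mathcomp Require Import all_boot all_order all_algebra.
From mathcomp Require Export reals.
Set Implicit Arguments. Unset Strict Implicit. Unset Printing Implicit Defensive.
Import Order.TTheory GRing.Theory Num.Theory.
Local Open Scope ring_scope.

Definition PK (R : realType) (m n d : nat) (a : 'I_m -> 'I_n -> 'rV[R]_d)
  (z : 'rV[R]_d) : 'M[R]_(m, n) :=
  \matrix_(i < m, j < n) \sum_(k < d) a i j 0 k * z 0 k.

Definition minor_idx (m n : nat) :=
  {p : ('I_m * 'I_m) * ('I_n * 'I_n) | (p.1.1 < p.1.2)%N && (p.2.1 < p.2.2)%N}.

Definition minor (R : ringType) (m n : nat) (k : minor_idx m n)
  (X : 'M[R]_(m, n)) : R :=
  let: (i1, i2, (j1, j2)) := val k in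
  X i1 j1 * X i2 j2 - X i1 j2 * X i2 j1.

Definition no_rank1_connections (R : fieldType) (m n : nat)
  (K : 'M[R]_(m, n) -> Prop) : Prop :=
  forall A B, K A -> K B -> A <> B -> \rank (A - B) <> 1%N.

From HB Require Import structures.
From mathcomp Require Import all_boot all_order all_algebra reals.
From mathcomp Require Import polyrcf ring lra.
From Stdlib Require Import Classical.
Import Order.TTheory GRing.Theory Num.Theory.
Local Open Scope ring_scope.

(* Replacing P_K(z) by P_K(z G) T with G, T invertible preserves the span of
   the 2x2 minors and the absence of rank-one matrices, and transposition
   exchanges rows and columns, so row i0 of X = P_K(y) may be taken to be
   (y_0, y_1, 0, ..., 0).  The minors of rows i0, i in columns {0, j} and {1, j}
   are y_0 X_ij and y_1 X_ij, which yields the square of any nonzero form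
   l_0 y_0 + l_1 y_1 that is a combination of entries off the columns 0, 1.
   Otherwise either X lives in the columns 0 and 1, the second one being F
   applied to the first for some F without real eigenvector (impossible for d
   odd, and making the form y ^ F y definite for d = 2), or d = 3 and all the
   off-column entries are multiples of one entry Y_1: then Y_1^2 is a
   combination of minors unless P_K(e_2) has rank one. *)

Lemma sum_ord2 (V : nmodType) (F : 'I_2 -> V) : \sum_k F k = F 0 + F 1.
Proof. by rewrite !big_ord_recl big_ord0 addr0; congr (F _ + F _); apply: val_inj. Qed.

Lemma sum_ord3 (V : nmodType) (F : 'I_3 -> V) : \sum_k F k = F 0 + F 1 + F 2.
Proof.
by rewrite !big_ord_recl big_ord0 addr0 addrA; congr (F _ + F _ + F _); apply: val_inj.
Qed.

Lemma rV2P (R : Type) (u v : 'rV[R]_2) : u 0 0 = v 0 0 -> u 0 1 = v 0 1 -> u = v.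
Proof.
move=> uv0 uv1; apply/rowP => -[[|[|//]] lt_k].
  by rewrite (_ : Ordinal lt_k = 0) //; apply: val_inj.
by rewrite (_ : Ordinal lt_k = 1) //; apply: val_inj.
Qed.

Lemma rV3_mulmx_trE (R : comNzRingType) (u y : 'rV[R]_3) :
  (u *m y^T) 0 0 = u 0 0 * y 0 0 + u 0 1 * y 0 1 + u 0 2 * y 0 2.
Proof. by rewrite mxE sum_ord3 !mxE. Qed.

Lemma row_mulmx_trE (R : comNzRingType) p q (M : 'M[R]_(p, q)) (y : 'rV[R]_q) k :
  (row k M *m y^T) 0 0 = (y *m M^T) 0 k.
Proof. by rewrite !mxE; apply: eq_bigr => l _; rewrite !mxE mulrC. Qed.

Lemma rV2_parallel {F : fieldType} {x v : 'rV[F]_2} :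
  x != 0 -> x 0 0 * v 0 1 = v 0 0 * x 0 1 -> exists mu, v = mu *: x.
Proof.
move=> nx cross; have [x0|x0] := eqVneq (x 0 0) 0.
  have x1 : x 0 1 != 0 by apply: contraNneq nx => x1; apply/eqP/rV2P; rewrite mxE.
  exists (v 0 1 / x 0 1); apply: rV2P; rewrite !mxE ?divfK // x0 mulr0.
  by move: cross; rewrite x0 mul0r => /esym/eqP; rewrite mulf_eq0 (negPf x1) orbF => /eqP.
exists (v 0 0 / x 0 0); apply: rV2P; rewrite !mxE ?divfK //.
by apply: (mulfI x0); rewrite cross; field.
Qed.

Lemma binary_form_definite {R : rcfType} {a b c : R} :
  (forall x0 x1, a * x0 ^+ 2 + b * x0 * x1 + c * x1 ^+ 2 = 0 -> x0 = 0 /\ x1 = 0) ->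
  a != 0 /\ forall y0 y1, 0 <= a * (a * y0 ^+ 2 + b * y0 * y1 + c * y1 ^+ 2).
Proof.
move=> aniso.
have a_neq0 : a != 0.
  apply/eqP => a0; have [/eqP] : (1 : R) = 0 /\ (0 : R) = 0.
    by apply: aniso; rewrite a0; ring.
  by rewrite oner_eq0.
set disc := b ^+ 2 - 4 * a * c.
have disc_lt0 : disc < 0.
  rewrite ltNge; apply/negP => disc_ge0.
  have sqrt_disc : Num.sqrt disc ^+ 2 = disc by rewrite sqr_sqrtr.
  have [_ /eqP] : (- b + Num.sqrt disc) / (2 * a) = 0 /\ (1 : R) = 0.
    apply: aniso; rewrite -[RHS](mul0r (4 * a)^-1) -(subrr disc) -[X in X - _]sqrt_disc.
    by rewrite /disc; field.
  by rewrite oner_eq0.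
split=> // y0 y1.
have := sqr_ge0 (2 * a * y0 + b * y1); have := sqr_ge0 y1.
have : 4 * (a * (a * y0 ^+ 2 + b * y0 * y1 + c * y1 ^+ 2)) =
    (2 * a * y0 + b * y1) ^+ 2 - disc * y1 ^+ 2 by rewrite /disc; ring.
nra.
Qed.

Lemma mxrank_outer_le1 {F : fieldType} {m n} (u : 'I_m -> F) (r : 'I_n -> F)
    (X : 'M[F]_(m, n)) :
  (forall i j, X i j = u i * r j) -> (\rank X <= 1)%N.
Proof.
move=> XE; have -> : X = \col_i u i *m \row_j r j.
  by apply/matrixP => i j; rewrite XE mxE big_ord1 !mxE.
exact: leq_trans (mxrankM_maxl _ _) (rank_leq_col _).
Qed.

Lemma rV_mulmx_tr_neq0 (R : realDomainType) d (v : 'rV[R]_d) :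
  v != 0 -> (v *m v^T) 0 0 != 0.
Proof.
apply: contraNneq => /eqP; rewrite mxE psumr_eq0 => [/allP v0|k _]; last first.
  by rewrite mxE -expr2 sqr_ge0.
apply/eqP/rowP => k; have := v0 k (mem_index_enum _).
by rewrite !mxE -expr2 sqrf_eq0 => /eqP.
Qed.

Lemma pid_mx_normal_form {F : fieldType} {p q} (A : 'M[F]_(p, q)) :
  exists2 G : 'M[F]_p, G \in unitmx &
  exists2 T : 'M[F]_q, T \in unitmx & G *m A *m T = pid_mx (\rank A).
Proof.
set L := col_ebase A; set U := row_ebase A.
exists (invmx L); first by rewrite unitmx_inv col_ebase_unit.
exists (invmx U); first by rewrite unitmx_inv row_ebase_unit.
rewrite -{1}(mulmx_ebase A) -/L -/U !mulmxA mulVmx ?col_ebase_unit // mul1mx.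
by rewrite -mulmxA mulmxV ?row_ebase_unit // mulmx1.
Qed.

Lemma mulmx_pid_entry {R : pzSemiRingType} {d n r} (y : 'rV[R]_d) (k : 'I_d) (j : 'I_n) :
  val k = val j -> (j < r)%N -> (y *m pid_mx r) 0 j = y 0 k.
Proof.
move=> kj lt_jr; rewrite mxE (bigD1 k) //= big1 ?addr0 => [|k' k'k].
  by rewrite mxE kj eqxx lt_jr mulr1.
by rewrite mxE -kj (inj_eq val_inj) (negPf k'k) mulr0.
Qed.

Lemma mulmx_pid_entry0 {R : pzSemiRingType} {d n r} (y : 'rV[R]_d) (j : 'I_n) :
  (r <= j)%N -> (y *m pid_mx r) 0 j = 0.
Proof.
move=> le_rj; rewrite mxE big1 // => k _; rewrite mxE.
by case: eqP => [->|_]; rewrite ?ltnNge ?le_rj mulr0.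
Qed.

Section MinorSpan.
Context {R : comNzRingType} {m n : nat}.
Implicit Types (X : 'M[R]_(m, n)) (f g : 'M[R]_(m, n) -> R).

Definition minor2 X i i' j j' := X i j * X i' j' - X i j' * X i' j.

Definition minor_span f :=
  exists beta : {ffun minor_idx m n -> R}, forall X, f X = \sum_k beta k * minor k X.

Lemma minor_span_ext {f g} : minor_span f -> f =1 g -> minor_span g.
Proof. by move=> [beta fE] fg; exists beta => X; rewrite -fg. Qed.

Lemma minor_span0 : minor_span (fun _ => 0).
Proof. by exists 0 => X; rewrite big1 // => k _; rewrite ffunE mul0r. Qed.

Lemma minor_spanD {f g} : minor_span f -> minor_span g -> minor_span (fun X => f X + g X).
Proof.
move=> [beta fE] [gamma gE]; exists (beta + gamma) => X.
by rewrite fE gE -big_split; apply: eq_bigr => k _; rewrite ffunE mulrDl.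
Qed.

Lemma minor_spanZ c {f} : minor_span f -> minor_span (fun X => c * f X).
Proof.
move=> [beta fE]; exists [ffun k => c * beta k] => X.
by rewrite fE mulr_sumr; apply: eq_bigr => k _; rewrite ffunE mulrA.
Qed.

Lemma minor_span_sum (I : Type) (r : seq I) (F : I -> 'M[R]_(m, n) -> R) :
  (forall i, minor_span (F i)) -> minor_span (fun X => \sum_(i <- r) F i X).
Proof.
move=> FP; elim: r => [|i r IHr].
  by apply: minor_span_ext minor_span0 _ => X; rewrite big_nil.
by apply: minor_span_ext (minor_spanD (FP i) IHr) _ => X; rewrite big_cons.
Qed.

Lemma minor_span_minor k : minor_span (minor k).
Proof.
exists [ffun k' => (k' == k)%:R] => X; rewrite (bigD1 k) //= big1 ?addr0.
  by rewrite ffunE eqxx mul1r.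
by move=> k' /negPf k'k; rewrite ffunE k'k mul0r.
Qed.

Lemma minor2_swapr X i i' j j' : minor2 X i' i j j' = - minor2 X i i' j j'.
Proof. by rewrite /minor2; ring. Qed.

Lemma minor2_swapc X i i' j j' : minor2 X i i' j' j = - minor2 X i i' j j'.
Proof. by rewrite /minor2; ring. Qed.

Lemma minor_span_minor2 i i' j j' : minor_span (fun X => minor2 X i i' j j').
Proof.
have minor_span_N f : minor_span f -> minor_span (fun X => - f X).
  by move=> fP; apply: minor_span_ext (minor_spanZ (-1) fP) _ => X; rewrite mulN1r.
have minor_span_lt (k1 k2 : 'I_m) (l1 l2 : 'I_n) : (k1 < k2)%N -> (l1 < l2)%N ->
    minor_span (fun X => minor2 X k1 k2 l1 l2).
  move=> lt_k lt_l; have kl : (k1 < k2)%N && (l1 < l2)%N by rewrite lt_k.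
  pose k : minor_idx m n := exist _ (k1, k2, (l1, l2)) kl.
  by apply: minor_span_ext (minor_span_minor k) _ => X.
have minor_span_ltr (k1 k2 : 'I_m) :
    (k1 < k2)%N -> minor_span (fun X => minor2 X k1 k2 j j').
  move=> lt_k; case: (ltngtP j j') => [lt_j|lt_j|/val_inj->].
  - exact: minor_span_lt.
  - by apply: minor_span_ext (minor_span_N _ (minor_span_lt _ _ _ _ lt_k lt_j)) _ => X;
      rewrite -minor2_swapc.
  - by apply: minor_span_ext minor_span0 _ => X; rewrite /minor2 subrr.
case: (ltngtP i i') => [lt_i|lt_i|/val_inj->].
- exact: minor_span_ltr.
- by apply: minor_span_ext (minor_span_N _ (minor_span_ltr _ _ lt_i)) _ => X;
    rewrite -minor2_swapr.
- by apply: minor_span_ext minor_span0 _ => X; rewrite /minor2 mulrC subrr.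
Qed.

Definition minor_rows (p q : 'rV[R]_m) (c c' : 'I_n) X :=
  (p *m col c X) 0 0 * (q *m col c' X) 0 0 - (p *m col c' X) 0 0 * (q *m col c X) 0 0.

Lemma minor_span_minor_rows p q c c' : minor_span (minor_rows p q c c').
Proof.
have sumP : minor_span (fun X => \sum_i \sum_i' (p 0 i * q 0 i') * minor2 X i i' c c').
  by apply: minor_span_sum => i; apply: minor_span_sum => i'; apply: minor_spanZ;
    apply: minor_span_minor2.
apply: minor_span_ext sumP _ => X; rewrite /minor_rows !mxE !mulr_suml -sumrB.
apply: eq_bigr => i _; rewrite !mulr_sumr -sumrB; apply: eq_bigr => i' _.
by rewrite !mxE /minor2; ring.
Qed.

End MinorSpan.

Lemma minor2_mulmx (R : comNzRingType) m n p (M : 'M[R]_(m, n)) (T : 'M[R]_(n, p))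
    i i' j j' :
  minor2 (M *m T) i i' j j' = \sum_l \sum_l' (T l j * T l' j') * minor2 M i i' l l'.
Proof.
rewrite /minor2 !mxE.
have expand (a b : 'I_p) : (\sum_l M i l * T l a) * (\sum_l' M i' l' * T l' b) =
    \sum_l \sum_l' (T l a * T l' b) * (M i l * M i' l').
  rewrite mulr_suml; apply: eq_bigr => l _; rewrite mulr_sumr.
  by apply: eq_bigr => l' _; ring.
rewrite !expand [in X in _ - X]exchange_big -sumrB; apply: eq_bigr => l _.
by rewrite -sumrB; apply: eq_bigr => l' _; rewrite /= mulrBr; congr (_ - _); ring.
Qed.

Lemma minor_span_mulmxr (R : comNzRingType) m n p (T : 'M[R]_(n, p)) g :
  minor_span g -> minor_span (fun M : 'M[R]_(m, n) => g (M *m T)).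
Proof.
move=> [beta gE].
have minorT k : minor_span (fun M : 'M[R]_(m, n) => minor k (M *m T)).
  case: k => [[[i i'] [j j']] ?] /=.
  have sumP : minor_span (fun M : 'M[R]_(m, n) =>
      \sum_l \sum_l' (T l j * T l' j') * minor2 M i i' l l').
    by apply: minor_span_sum => l; apply: minor_span_sum => l'; apply: minor_spanZ;
      apply: minor_span_minor2.
  apply: minor_span_ext sumP _ => M.
  by rewrite -[RHS]/(minor2 (M *m T) i i' j j') minor2_mulmx.
have sumP : minor_span (fun M : 'M[R]_(m, n) => \sum_k beta k * minor k (M *m T)).
  by apply: minor_span_sum => k; apply: minor_spanZ.
by apply: minor_span_ext sumP _ => M; rewrite gE.
Qed.

Lemma minor_span_trmx (R : comNzRingType) m n g :
  minor_span g -> minor_span (fun M : 'M[R]_(m, n) => g M^T).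
Proof.
move=> [beta gE].
have sumP : minor_span (fun M : 'M[R]_(m, n) => \sum_k beta k * minor k M^T).
  apply: minor_span_sum => k; apply: minor_spanZ; case: k => [[[j j'] [i i']] ?] /=.
  apply: minor_span_ext (minor_span_minor2 i i' j j') _ => M.
  by rewrite /minor2 /minor /= !mxE; ring.
by apply: minor_span_ext sumP _ => M; rewrite gE.
Qed.

Definition nonneg_minor_comb {R : numDomainType} {V : Type} {m n}
    (Y : V -> 'M[R]_(m, n)) :=
  exists2 f, minor_span f & (forall v, 0 <= f (Y v)) /\ exists v, f (Y v) != 0.

Lemma nonneg_minor_comb_sqr {R : realDomainType} {V m n} {Y : V -> 'M[R]_(m, n)} {f}
    (l : V -> R) (v : V) :
  minor_span f -> (forall v, f (Y v) = l v ^+ 2) -> l v != 0 -> nonneg_minor_comb Y.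
Proof.
move=> fP fE lv; exists f => //; split=> [v'|]; first by rewrite fE sqr_ge0.
by exists v; rewrite fE sqrf_eq0.
Qed.

Lemma nonneg_minor_comb_coef {R : numDomainType} {V m n} {Y : V -> 'M[R]_(m, n)} :
  nonneg_minor_comb Y ->
  exists beta : {ffun minor_idx m n -> R},
    beta != 0 /\ (forall v, 0 <= \sum_k beta k * minor k (Y v)) /\
    exists v, \sum_k beta k * minor k (Y v) != 0.
Proof.
move=> [f [beta fE] [f_ge0 [v fv]]]; exists beta; split.
  by apply: contraNneq fv => beta0; rewrite fE beta0 big1 // => k _; rewrite ffunE mul0r.
by split=> [v'|]; [rewrite -fE | exists v; rewrite -fE].
Qed.

Lemma nonneg_minor_comb_reparam {R : numFieldType} {m n d}
    {Y Z : 'rV[R]_d -> 'M[R]_(m, n)} {G : 'M[R]_d} {T : 'M[R]_n} :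
  G \in unitmx -> (forall y, Z y = Y (y *m G) *m T) ->
  nonneg_minor_comb Z -> nonneg_minor_comb Y.
Proof.
move=> uG ZE [f fP [f_ge0 [y fy]]].
exists (fun X => f (X *m T)); first exact: minor_span_mulmxr.
split=> [z|]; last by exists (y *m G); rewrite -ZE.
by rewrite -[z](mulmxKV uG) -ZE.
Qed.

Lemma nonneg_minor_comb_trmx {R : numDomainType} {V m n}
    {Y : V -> 'M[R]_(m, n)} {Z : V -> 'M[R]_(n, m)} :
  (forall v, Z v = (Y v)^T) -> nonneg_minor_comb Z -> nonneg_minor_comb Y.
Proof.
move=> ZE [f fP [f_ge0 [v fv]]].
exists (fun X => f X^T); first exact: minor_span_trmx.
by split=> [v'|]; [rewrite -ZE | exists v; rewrite -ZE].
Qed.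

Section PKFacts.
Context {R : realType} {m n d : nat}.
Implicit Types (a : 'I_m -> 'I_n -> 'rV[R]_d) (y z : 'rV[R]_d).

Definition coef_col a (c : 'I_n) : 'M[R]_(m, d) := \matrix_(i, k) a i c 0 k.

Lemma PK_entry a z i j : PK a z i j = (a i j *m z^T) 0 0.
Proof. by rewrite !mxE; apply: eq_bigr => k _; rewrite !mxE. Qed.

Lemma col_PK a c z : col c (PK a z) = coef_col a c *m z^T.
Proof. by apply/colP => i; rewrite !mxE; apply: eq_bigr => k _; rewrite !mxE. Qed.

Lemma PK_col_entry a z i c : PK a z i c = (coef_col a c *m z^T) i 0.
Proof. by rewrite -col_PK [RHS]mxE. Qed.

Lemma row_PK a i0 z : row i0 (PK a z) = z *m (\matrix_(l < n) a i0 l)^T.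
Proof.
by apply/rowP => l; rewrite !mxE; apply: eq_bigr => k _; rewrite !mxE mulrC.
Qed.

Lemma PK_trmx a z : PK (fun j i => a i j) z = (PK a z)^T.
Proof. by apply/matrixP => j i; rewrite !mxE. Qed.

Lemma PK0 a : PK a 0 = 0.
Proof. by apply/matrixP => i j; rewrite PK_entry trmx0 mulmx0 !mxE. Qed.

Lemma PK_mulmx_reparam a (G : 'M[R]_d) (T : 'M[R]_n) :
  exists b : 'I_m -> 'I_n -> 'rV[R]_d, forall y, PK b y = PK a (y *m G) *m T.
Proof.
exists (fun i j => \sum_l T l j *: (a i l *m G^T)) => y.
apply/matrixP => i j; rewrite PK_entry mulmx_suml summxE [RHS]mxE.
apply: eq_bigr => l _; rewrite PK_entry -scalemxAl mxE trmx_mul mulmxA.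
by rewrite mulrC.
Qed.

Lemma PK_rank_gt1 {a z} :
  injective (PK a) -> no_rank1_connections (fun X => exists z, X = PK a z) ->
  z != 0 -> (1 < \rank (PK a z))%N.
Proof.
move=> inj_a no_r1 nz.
have PKz_neq0 : PK a z != 0 by apply: contra nz => /eqP; rewrite -(PK0 a) => /inj_a ->.
have : \rank (PK a z - PK a 0) != 1%N.
  by apply/eqP/no_r1; [exists z | exists 0 | rewrite PK0; apply/eqP].
by rewrite PK0 subr0 ltn_neqAle eq_sym => ->; rewrite lt0n mxrank_eq0.
Qed.

End PKFacts.

Section TwoColumns.
Context {R : realType} {m n d : nat} {b : 'I_m -> 'I_n -> 'rV[R]_d} {c0 c1 : 'I_n}.
Hypotheses (c01 : c0 != c1)
  (b_two_cols : forall i j, j != c0 -> j != c1 -> b i j = 0)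
  (rank_PKb : forall y, y != 0 -> (1 < \rank (PK b y))%N).
Local Notation C c := (coef_col b c).

Lemma two_cols_dependent_eq0 y (u : 'I_m -> R) r0 r1 :
  (forall i, PK b y i c0 = r0 * u i) -> (forall i, PK b y i c1 = r1 * u i) -> y = 0.
Proof.
move=> col0 col1; apply/eqP/negPn/negP => /rank_PKb; rewrite ltnNge => /negP; apply.
apply: (mxrank_outer_le1 u (fun j => r0 * (j == c0)%:R + r1 * (j == c1)%:R)).
move=> i j; case: (eqVneq j c0) => [->|jc0]; first by rewrite col0 (negPf c01) /=; ring.
case: (eqVneq j c1) => [->|jc1]; first by rewrite col1 /=; ring.
by rewrite PK_entry b_two_cols // mul0mx mxE /=; ring.
Qed.

Lemma coef_col0_row_full : row_full (C c0).
Proof.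
apply/negPn/negP => not_full.
have /rowV0Pn [v /sub_kermxP vC0 nv] : kermx (C c0)^T != 0.
  by rewrite kermx_eq0 /row_free mxrank_tr.
move/eqP: nv; apply; apply: (two_cols_dependent_eq0 _ (fun i => PK b v i c1) 0 1) => i.
  by rewrite mul0r PK_col_entry -[C c0]trmxK -trmx_mul vC0 trmx0 mxE.
by rewrite mul1r.
Qed.

Lemma two_cols_eigvec {F : 'M[R]_d} {x : 'rV[R]_d} {mu} :
  C c1 = C c0 *m F -> x *m F^T = mu *: x -> x = 0.
Proof.
move=> C1E xF.
apply: (two_cols_dependent_eq0 _ (fun i => PK b x i c0) 1 mu) => i.
  by rewrite mul1r.
by rewrite !PK_col_entry C1E -mulmxA -[F]trmxK -trmx_mul xF linearZ /= -scalemxAr mxE.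
Qed.

Lemma two_cols_cases : nonneg_minor_comb (PK b) \/ exists F : 'M[R]_d, C c1 = C c0 *m F.
Proof.
have [Binv Binv_C0] := row_fullP coef_col0_row_full.
case: (classic (exists rho : 'rV_m, rho *m C c0 = 0 /\ rho *m C c1 != 0)).
  move=> [rho [rho_C0 rho_C1]]; left; set l := rho *m C c1.
  (* On the columns c0, c1, (l Binv) P_K(y) reads (l y, _) and rho P_K(y) reads
     (0, l y), so their minor is (l y)^2. *)
  have lBinv_C0 : l *m Binv *m C c0 = l by rewrite -mulmxA Binv_C0 mulmx1.
  apply: (nonneg_minor_comb_sqr (fun y => (l *m y^T) 0 0) l
           (minor_span_minor_rows (l *m Binv) rho c0 c1)); last exact: rV_mulmx_tr_neq0.
  move=> y; rewrite /minor_rows !col_PK !mulmxA lBinv_C0 rho_C0 mul0mx.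
  by rewrite [X in _ - _ * X]mxE mulr0 subr0 expr2.
move=> no_rho; right; exists (Binv *m C c1).
set P := 1%:M - C c0 *m Binv.
have P_C0 : P *m C c0 = 0 by rewrite mulmxBl mul1mx -mulmxA Binv_C0 mulmx1 subrr.
have P_C1 : P *m C c1 = 0.
  apply/row_matrixP => i; rewrite row_mul row0; apply/eqP/negPn/negP => nz.
  by apply: no_rho; exists (row i P); rewrite -row_mul P_C0 row0.
by move/eqP: P_C1; rewrite mulmxBl mul1mx subr_eq0 mulmxA => /eqP.
Qed.

Lemma two_cols_odd : odd d -> nonneg_minor_comb (PK b).
Proof.
move=> odd_d; case: two_cols_cases => [//|[F C1E]].
have /odd_poly_root [mu] : ~~ odd (size (char_poly F^T)).
  by rewrite size_char_poly /= negbK.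
rewrite -eigenvalue_root_char => /eigenvalueP [x xF nx].
by rewrite (two_cols_eigvec C1E xF) eqxx in nx.
Qed.

End TwoColumns.

Lemma two_cols_dim2 {R : realType} {m n} {b : 'I_m -> 'I_n -> 'rV[R]_2} {c0 c1 : 'I_n} :
  c0 != c1 -> (forall i j, j != c0 -> j != c1 -> b i j = 0) ->
  (forall y, y != 0 -> (1 < \rank (PK b y))%N) -> nonneg_minor_comb (PK b).
Proof.
move=> c01 b_two_cols rank_PKb.
case: (two_cols_cases c01 b_two_cols rank_PKb) => [//|[F C1E]].
have [Binv Binv_C0] := row_fullP (coef_col0_row_full c01 b_two_cols rank_PKb).
pose Q (y : 'rV[R]_2) := y 0 0 * (y *m F^T) 0 1 - (y *m F^T) 0 0 * y 0 1.
have minor_rowsE y : minor_rows (row 0 Binv) (row 1 Binv) c0 c1 (PK b y) = Q y.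
  have Binv_C1 : Binv *m coef_col b c1 = F by rewrite C1E mulmxA Binv_C0 mul1mx.
  rewrite /minor_rows !col_PK !mulmxA -!(row_mul _ Binv) Binv_C0 Binv_C1.
  by rewrite !row_mulmx_trE trmx1 mulmx1.
have Q_aniso x : Q x = 0 -> x = 0.
  move=> /eqP; rewrite subr_eq0 => /eqP cross; apply/eqP/negPn/negP => nx.
  have [mu xF] := rV2_parallel nx cross.
  by rewrite (two_cols_eigvec c01 b_two_cols rank_PKb C1E xF) eqxx in nx.
have QE y :
    Q y = F 1 0 * y 0 0 ^+ 2 + (F 1 1 - F 0 0) * y 0 0 * y 0 1 + (- F 0 1) * y 0 1 ^+ 2.
  by rewrite /Q !mxE !sum_ord2 !mxE; ring.
have aniso x0 x1 :
    F 1 0 * x0 ^+ 2 + (F 1 1 - F 0 0) * x0 * x1 + (- F 0 1) * x1 ^+ 2 = 0 ->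
    x0 = 0 /\ x1 = 0.
  pose x : 'rV[R]_2 := \row_k [:: x0; x1]`_k.
  have [<- <-] : x 0 0 = x0 /\ x 0 1 = x1 by rewrite !mxE.
  by rewrite -QE => /Q_aniso ->; rewrite !mxE.
have [a_neq0 aQ_ge0] := binary_form_definite aniso.
exists (fun X => F 1 0 * minor_rows (row 0 Binv) (row 1 Binv) c0 c1 X).
  exact/minor_spanZ/minor_span_minor_rows.
split=> [y|]; first by rewrite minor_rowsE QE aQ_ge0.
exists (delta_mx 0 0); rewrite minor_rowsE QE !mxE /=.
by rewrite expr1n expr0n /= !mulr0 mulr1 !addr0 mulf_neq0.
Qed.

Section RowNormal.
Context {R : realType} {m n d : nat} {b : 'I_m -> 'I_n -> 'rV[R]_d} {i0 : 'I_m}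
  {c0 c1 : 'I_n} {k0 k1 : 'I_d}.
Hypotheses (k01 : k0 != k1)
  (row_c0 : forall y, PK b y i0 c0 = y 0 k0) (row_c1 : forall y, PK b y i0 c1 = y 0 k1)
  (row_off : forall y j, j != c0 -> j != c1 -> PK b y i0 j = 0).

Lemma minor2_row_i0 y i c j :
  j != c0 -> j != c1 -> minor2 (PK b y) i0 i c j = PK b y i0 c * PK b y i j.
Proof. by move=> jc0 jc1; rewrite /minor2 (row_off _ j) // mul0r subr0. Qed.

Lemma off_cols_sqr_nonneg i j i' j' s s' :
  j != c0 -> j != c1 -> j' != c0 -> j' != c1 ->
  (forall k, k != k0 -> k != k1 -> (s *: b i j + s' *: b i' j') 0 k = 0) ->
  s *: b i j + s' *: b i' j' != 0 -> nonneg_minor_comb (PK b).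
Proof.
move=> jc0 jc1 j'c0 j'c1; set l := s *: b i j + s' *: b i' j' => l_supp nl.
pose L (y : 'rV[R]_d) := l 0 k0 * y 0 k0 + l 0 k1 * y 0 k1.
have combE y : s * PK b y i j + s' * PK b y i' j' = L y.
  have -> : s * PK b y i j + s' * PK b y i' j' = (l *m y^T) 0 0.
    by rewrite !PK_entry mulmxDl -!scalemxAl !mxE.
  rewrite mxE (bigD1 k0) // (bigD1 k1) 1?eq_sym //= big1 ?addr0 => [|k /andP[kk1 kk0]].
    by rewrite /L /l !mxE.
  by rewrite l_supp ?mul0r.
apply: (nonneg_minor_comb_sqr L l (f := fun X =>
    l 0 k0 * (s * minor2 X i0 i c0 j + s' * minor2 X i0 i' c0 j') +
    l 0 k1 * (s * minor2 X i0 i c1 j + s' * minor2 X i0 i' c1 j'))).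
- by apply: minor_spanD; apply: minor_spanZ; apply: minor_spanD; apply: minor_spanZ;
    apply: minor_span_minor2.
- move=> y; rewrite !minor2_row_i0 // row_c0 row_c1 expr2 -{2}combE /L; ring.
- apply: contra nl; rewrite /L -!expr2 paddr_eq0 ?sqr_ge0 // !sqrf_eq0.
  move=> /andP[/eqP l0 /eqP l1]; apply/eqP/rowP => k; rewrite [RHS]mxE.
  by case: (eqVneq k k0) => [->//|kk0]; case: (eqVneq k k1) => [->//|kk1]; apply: l_supp.
Qed.

End RowNormal.

Lemma row_normal_dim2 {R : realType} {m n} {b : 'I_m -> 'I_n -> 'rV[R]_2} {i0}
    {c0 c1 : 'I_n} :
  c0 != c1 ->
  (forall y, PK b y i0 c0 = y 0 0) -> (forall y, PK b y i0 c1 = y 0 1) ->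
  (forall y j, j != c0 -> j != c1 -> PK b y i0 j = 0) ->
  (forall y, y != 0 -> (1 < \rank (PK b y))%N) -> nonneg_minor_comb (PK b).
Proof.
move=> c01 row_c0 row_c1 row_off rank_PKb.
case: (classic (exists i j, [/\ j != c0, j != c1 & b i j != 0])).
  move=> [i [j [jc0 jc1 bij]]].
  apply: (off_cols_sqr_nonneg _ row_c0 row_c1 row_off i j i j 1 0) => //.
  - by move=> -[[|[|//]] ?].
  - by rewrite scale1r scale0r addr0.
move=> b_off0; apply: (two_cols_dim2 c01 _ rank_PKb) => i j jc0 jc1.
by apply/eqP/negPn/negP => bij; apply: b_off0; exists i, j.
Qed.

Section RowNormalDim3.
Context {R : realType} {m n : nat} {b : 'I_m -> 'I_n -> 'rV[R]_3} {i0 : 'I_m}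
  {c0 c1 : 'I_n}.
Hypotheses (c01 : c0 != c1)
  (row_c0 : forall y, PK b y i0 c0 = y 0 0) (row_c1 : forall y, PK b y i0 c1 = y 0 1)
  (row_off : forall y j, j != c0 -> j != c1 -> PK b y i0 j = 0)
  (rank_PKb : forall y, y != 0 -> (1 < \rank (PK b y))%N).
Local Notation w i j := (b i j 0 2).

Lemma dim3_pivot_sqr_nonneg i1 j1 i j :
  j1 != c0 -> j1 != c1 -> w i1 j1 != 0 ->
  (forall i, w i1 j1 *: b i j1 = w i j1 *: b i1 j1) ->
  w i1 j1 * w i j != w i j1 * w i1 j -> nonneg_minor_comb (PK b).
Proof.
move=> j1c0 j1c1 g_neq0 col_j1 pivot; set g := w i1 j1 in g_neq0 col_j1 pivot *.
set l := g *: b i j - w i j1 *: b i1 j.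
have l2_neq0 : l 0 2 != 0 by rewrite !mxE subr_eq0.
pose Y1 y := PK b y i1 j1.
have y0Y1 y : minor2 (PK b y) i0 i1 c0 j1 = y 0 0 * Y1 y.
  by rewrite (minor2_row_i0 row_off) ?row_c0.
have y1Y1 y : minor2 (PK b y) i0 i1 c1 j1 = y 0 1 * Y1 y.
  by rewrite (minor2_row_i0 row_off) ?row_c1.
have scale_entry (c : R) (u y : 'rV[R]_3) : c * (u *m y^T) 0 0 = ((c *: u) *m y^T) 0 0.
  by rewrite -scalemxAl [RHS]mxE.
have lY1 y : g * minor2 (PK b y) i1 i j1 j = Y1 y * (l *m y^T) 0 0.
  have gY k : g * PK b y k j1 = w k j1 * Y1 y.
    by rewrite /Y1 !PK_entry !scale_entry col_j1.
  have -> : (l *m y^T) 0 0 = g * PK b y i j - w i j1 * PK b y i1 j.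
    by rewrite !PK_entry !rV3_mulmx_trE !mxE; ring.
  transitivity (Y1 y * (g * PK b y i j) - PK b y i1 j * (g * PK b y i j1)).
    by rewrite /Y1 /minor2; ring.
  by rewrite gY; ring.
(* Y_1 y_0, Y_1 y_1 and Y_1 (l y) are minors, and y_0, y_1, l y span all linear
   forms because l 0 2 != 0; expanding Y_1 in that basis gives Y_1^2. *)
apply: (nonneg_minor_comb_sqr Y1 (delta_mx 0 2) (f := fun X =>
    b i1 j1 0 0 * minor2 X i0 i1 c0 j1 + b i1 j1 0 1 * minor2 X i0 i1 c1 j1 +
    g / l 0 2 * (g * minor2 X i1 i j1 j + (- l 0 0) * minor2 X i0 i1 c0 j1 +
                 (- l 0 1) * minor2 X i0 i1 c1 j1))).
- apply: minor_spanD; last apply: minor_spanZ; do !apply: minor_spanD;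
    by apply: minor_spanZ; apply: minor_span_minor2.
- move=> y; rewrite !y0Y1 !y1Y1 lY1 rV3_mulmx_trE.
  transitivity (Y1 y * (b i1 j1 0 0 * y 0 0 + b i1 j1 0 1 * y 0 1 + g * y 0 2)).
    by field.
  by rewrite /Y1 PK_entry rV3_mulmx_trE expr2.
- by rewrite /Y1 PK_entry rV3_mulmx_trE !mxE /= !mulr0 !add0r mulr1.
Qed.

Lemma row_normal_dim3 : nonneg_minor_comb (PK b).
Proof.
case: (classic (exists i j i' j' s s', [/\ j != c0, j != c1, j' != c0, j' != c1 &
    (s *: b i j + s' *: b i' j') 0 2 = 0 /\ s *: b i j + s' *: b i' j' != 0])).
  move=> [i [j [i' [j' [s [s' [jc0 jc1 j'c0 j'c1 [l2 nl]]]]]]]].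
  apply: (off_cols_sqr_nonneg _ row_c0 row_c1 row_off i j i' j' s s') => //.
  by move=> -[[|[|[|//]]] lt_k] // _ _; rewrite -l2; congr (_ 0 _); apply: val_inj.
move=> no_pair.
have pair_eq0 i j i' j' s s' : j != c0 -> j != c1 -> j' != c0 -> j' != c1 ->
    s * w i j + s' * w i' j' = 0 -> s *: b i j + s' *: b i' j' = 0.
  move=> jc0 jc1 j'c0 j'c1 w0; apply/eqP/negPn/negP => nz; apply: no_pair.
  by exists i, j, i', j', s, s'; split => //; split => //; rewrite !mxE.
case: (classic (exists i1 j1, [/\ j1 != c0, j1 != c1 & w i1 j1 != 0])); last first.
  move=> w_off0; apply: (two_cols_odd c01 _ rank_PKb) => // i j jc0 jc1.
  have := pair_eq0 i j i j 1 0 jc0 jc1 jc0 jc1.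
  rewrite scale1r scale0r addr0 mul1r mul0r addr0; apply.
  by apply/eqP/negPn/negP => wij; apply: w_off0; exists i, j.
move=> [i1 [j1 [j1c0 j1c1 g_neq0]]].
have col_j1 i : w i1 j1 *: b i j1 = w i j1 *: b i1 j1.
  by apply/eqP; rewrite -subr_eq0 -scaleNr; apply/eqP; apply: pair_eq0 => //; ring.
case: (classic (exists i j, w i1 j1 * w i j != w i j1 * w i1 j)).
  by move=> [i [j pivot]]; apply: (dim3_pivot_sqr_nonneg i1 j1 i j).
move=> no_pivot; exfalso.
have e2_neq0 : (delta_mx 0 2 : 'rV[R]_3) != 0.
  by apply/eqP => /rowP/(_ 2)/eqP; rewrite !mxE /= oner_eq0.
have := rank_PKb _ e2_neq0; rewrite ltnNge => /negP; apply.
apply: (mxrank_outer_le1 (fun i => w i j1 / w i1 j1) (fun j => w i1 j)) => i j.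
rewrite PK_entry rV3_mulmx_trE !mxE /= !mulr0 !add0r mulr1.
have -> : w i j = w i j1 * w i1 j / w i1 j1.
  apply: (canRL (mulfK g_neq0)); rewrite mulrC; apply/eqP/negPn/negP => pivot.
  by apply: no_pivot; exists i, j.
by rewrite mulrAC.
Qed.

End RowNormalDim3.

Lemma nonneg_minor_comb_row_rank2 {R : realType} {m n d} {a : 'I_m -> 'I_n -> 'rV[R]_d}
    {i0 : 'I_m} :
  (d = 2 \/ d = 3)%N -> (forall z, z != 0 -> (1 < \rank (PK a z))%N) ->
  \rank (\matrix_(l < n) a i0 l) = 2%N -> nonneg_minor_comb (PK a).
Proof.
move=> d23 rank_PKa rank_row.
set A := (\matrix_(l < n) a i0 l)^T.
have [G uG [T uT]] := pid_mx_normal_form A; rewrite mxrank_tr rank_row => GAT.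
have [b PKbE] := PK_mulmx_reparam a G T.
apply: (nonneg_minor_comb_reparam uG PKbE).
have rank_PKb y : y != 0 -> (1 < \rank (PK b y))%N.
  move=> ny; rewrite PKbE mxrankMfree ?row_free_unit //; apply: rank_PKa.
  by apply: contra ny => /eqP yG0; rewrite -[y](mulmxK uG) yG0 mul0mx.
have rowE y j : PK b y i0 j = (y *m pid_mx 2) 0 j.
  have := congr1 (fun M : 'rV[R]_n => M 0 j) (row_mul i0 (PK a (y *m G)) T).
  by rewrite row_PK -/A -!mulmxA (mulmxA G) GAT -PKbE [LHS]mxE => <-.
have n_gt1 : (1 < n)%N by rewrite -rank_row rank_leq_row.
pose c0 : 'I_n := Ordinal (ltnW n_gt1); pose c1 : 'I_n := Ordinal n_gt1.
have row_off y j : j != c0 -> j != c1 -> PK b y i0 j = 0.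
  by case: j => [[|[|j]] lt_j] // _ _; rewrite rowE mulmx_pid_entry0.
case: d23 => d_eq; subst d.
  by apply: (row_normal_dim2 (c0 := c0) (c1 := c1) _ _ _ row_off rank_PKb) => // y;
    rewrite rowE; apply: mulmx_pid_entry.
by apply: (row_normal_dim3 (c0 := c0) (c1 := c1) _ _ _ row_off rank_PKb) => // y;
  rewrite rowE; apply: mulmx_pid_entry.
Qed.

Theorem lemma6 (R : realType) (m n d : nat) (a : 'I_m -> 'I_n -> 'rV[R]_d) :
  (d = 2 \/ d = 3)%N ->
  injective (PK a) ->
  no_rank1_connections (fun X => exists z, X = PK a z) ->
  ((exists i0 : 'I_m, \rank (\matrix_(l < n) a i0 l) = 2%N) \/
   (exists j0 : 'I_n, \rank (\matrix_(l < m) a l j0) = 2%N)) ->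
  exists beta : {ffun minor_idx m n -> R},
    beta != 0 /\
    (forall z : 'rV[R]_d, 0 <= \sum_(k : minor_idx m n) beta k * minor k (PK a z)) /\
    (exists z : 'rV[R]_d, \sum_(k : minor_idx m n) beta k * minor k (PK a z) != 0).
Proof.
move=> d23 inj_a no_r1 rank2; apply: nonneg_minor_comb_coef.
have rank_PKa z : z != 0 -> (1 < \rank (PK a z))%N by exact: PK_rank_gt1.
case: rank2 => [[i0 rank_row]|[j0 rank_col]].
  exact: nonneg_minor_comb_row_rank2 d23 rank_PKa rank_row.
apply: (nonneg_minor_comb_trmx (PK_trmx a)).
apply: (nonneg_minor_comb_row_rank2 (a := fun j i => a i j) d23 _ rank_col) => z nz.
by rewrite PK_trmx mxrank_tr rank_PKa.
Qed.
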